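(* Let $n\ge1$, $\delta\ge0$ and $\hat r\in\mathbb R^n$ with $\hat r_1\ge\hat r_2\ge\cdots\ge\hat r_n$. For $k\in\{1,\dots,n\}$ let $u^{(k)}\in\Delta_n$ have its first $k$ entries equal to $1/k$ and the rest $0$, and $A_k:=\frac1k\sum_{i=1}^k\hat r_i$. Then the problem $\max_{\pi\in\Delta_n}\{\langle\pi,\hat r\rangle-\delta\|\pi\|_\infty\}$ has an optimizer of the form $u^{(m)}$ for some $m\in\arg\max_{1\le k\le n}\{A_k-\delta/k\}$.
   Context: $\Delta_n$ is the probability simplex in $\mathbb R^n$; $\|\pi\|_\infty=\max_i|\pi_i|$. *)

From mathcomp Require Import all_boot all_order all_algebra.
Set Implicit Arguments. Unset Strict Implicit. Unset Printing Implicit Defensive.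
Import Order.TTheory GRing.Theory Num.Theory.
Local Open Scope ring_scope.

Definition in_simplex (R : realFieldType) (n : nat) (pi : 'I_n -> R) : Prop :=
  (forall i, 0 <= pi i) /\ \sum_(i < n) pi i = 1.

Definition linf (R : realFieldType) (n : nat) (pi : 'I_n -> R) : R :=
  \big[Num.max/0]_(i < n) `|pi i|.

Definition objective (R : realFieldType) (n : nat) (delta : R) (r pi : 'I_n -> R) : R :=
  \sum_(i < n) pi i * r i - delta * linf pi.

(* u^(k): first k entries 1/k, rest 0 (k is 1-based, entries i < k in 0-based indexing) *)
Definition uvec (R : realFieldType) (n k : nat) : 'I_n -> R :=
  fun i => if (i < k)%N then k%:R^-1 else 0.

Definition Aavg (R : realFieldType) (n : nat) (r : 'I_n -> R) (k : nat) : R :=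
  k%:R^-1 * \sum_(i < n | (i < k)%N) r i.

From mathcomp Require Import all_boot all_order all_algebra.
Import Order.TTheory GRing.Theory Num.Theory.
Local Open Scope ring_scope.

(* Let [V] be the maximum of [A_k - delta/k], attained at [m]; the point [u^(m)]
   has objective value exactly [V].  With [w := r - V], the optimality of [m] says
   that every prefix sum of [w] is at most [delta].  Since [w] is nonincreasing,
   its positive entries form a prefix, so the sum of the positive parts of [w] is
   at most [delta] too.  Hence for [pi] in the simplex with [t := ||pi||_oo],
   [<pi, r> - V = <pi, w> <= t * sum_i max(w_i, 0) <= t * delta],
   i.e. the objective at [pi] is at most [V]. *)

Lemma exists_argmax_nat {disp} {T : orderType disp} (f : nat -> T) {n : nat} :
  (0 < n)%N ->
  exists2 m, (1 <= m <= n)%N & forall k, (1 <= k <= n)%N -> (f k <= f m)%O.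
Proof.
move=> n_gt0.
case: (@arg_maxP _ _ 'I_n (Ordinal n_gt0) xpredT (fun i => f i.+1) isT) => i _ imax.
exists i.+1; first by rewrite /= ltn_ord.
case=> [//|k] /= lt_k_n.
exact: (imax (Ordinal lt_k_n)).
Qed.

Section PrefixSums.
Context {n : nat}.

Lemma sum_prefixS {V : nmodType} (F : 'I_n -> V) {k : nat} (lt_k_n : (k < n)%N) :
  \sum_(i < n | (i < k.+1)%N) F i = F (Ordinal lt_k_n) + \sum_(i < n | (i < k)%N) F i.
Proof.
rewrite (bigD1 (Ordinal lt_k_n)) //=; congr (_ + _); apply: eq_bigl => i /=.
by rewrite ltnS -val_eqE /= andbC -ltn_neqAle.
Qed.

Lemma sum_prefix1 (R : pzSemiRingType) (k : nat) : (k <= n)%N ->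
  \sum_(i < n | (i < k)%N) (1 : R) = k%:R.
Proof.
elim: k => [|k IHk] le_k_n; first by rewrite big_pred0.
by rewrite (sum_prefixS (fun=> 1) le_k_n) IHk 1?ltnW // -natr1 addrC.
Qed.

Context {R : realDomainType}.

Lemma sum_prefix_max0_le (w : 'I_n -> R) (c : R) :
  (forall i j : 'I_n, (i <= j)%N -> w j <= w i) ->
  (forall k, (k <= n)%N -> \sum_(i < n | (i < k)%N) w i <= c) ->
  \sum_(i < n) Num.max (w i) 0 <= c.
Proof.
move=> w_noninc prefix_le.
suff: forall k, (k <= n)%N -> \sum_(i < n | (i < k)%N) Num.max (w i) 0 <= c.
  by move/(_ n (leqnn n)); rewrite (eq_bigl predT) // => i; rewrite /= ltn_ord.
elim=> [|k IHk] lt_k_n; first by have := prefix_le 0%N isT; rewrite !big_pred0.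
rewrite sum_prefixS; have [wk_le0|wk_gt0] := lerP (w (Ordinal lt_k_n)) 0.
  by rewrite add0r IHk // ltnW.
(* [w_k > 0] forces [w_i >= w_k > 0] for all [i < k]: the whole prefix is positive. *)
apply: le_trans (prefix_le k.+1 lt_k_n); rewrite sum_prefixS lerD //.
apply: ler_sum => i lt_i_k.
rewrite max_l // ltW // (lt_le_trans wk_gt0) //.
exact/w_noninc/ltnW.
Qed.

Lemma sum_mul_le_max0 (pi w : 'I_n -> R) (t : R) :
  (forall i, 0 <= pi i) -> (forall i, pi i <= t) ->
  \sum_(i < n) pi i * w i <= t * \sum_(i < n) Num.max (w i) 0.
Proof.
move=> pi_ge0 pi_le_t; rewrite mulr_sumr; apply: ler_sum => i _.
have [wi_le0|wi_gt0] := lerP (w i) 0.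
  by rewrite mulr0 mulr_ge0_le0.
by rewrite ler_wpM2r // ltW.
Qed.

End PrefixSums.

Section Objective.
Variables (R : realFieldType) (n : nat).

Lemma le_linf (pi : 'I_n -> R) (i : 'I_n) : pi i <= linf pi.
Proof. exact: le_trans (ler_norm _) (le_bigmax _ _ _). Qed.

Lemma uvec_simplex (m : nat) : (1 <= m <= n)%N -> in_simplex (@uvec R n m).
Proof.
move=> /andP[m_gt0 le_m_n]; split=> [i|].
  by rewrite /uvec; case: ifP; rewrite // invr_ge0.
rewrite /uvec -big_mkcond /= -[X in \sum_(_ | _) X]mulr1 -mulr_sumr.
by rewrite sum_prefix1 // mulVf // pnatr_eq0 -lt0n.
Qed.

Lemma linf_uvec (m : nat) : (1 <= m <= n)%N -> linf (@uvec R n m) = m%:R^-1.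
Proof.
move=> /andP[m_gt0 le_m_n]; have inv_ge0 : 0 <= m%:R^-1 :> R by rewrite invr_ge0.
apply/le_anti; rewrite (le_trans _ (le_linf _ (Ordinal (leq_trans m_gt0 le_m_n)))); last first.
  by rewrite /uvec /= m_gt0.
rewrite andbT; apply: bigmax_le => // i _.
by rewrite /uvec; case: ifP; rewrite ?normr0 ?ger0_norm.
Qed.

Lemma objective_uvec (delta : R) (r : 'I_n -> R) (m : nat) : (1 <= m <= n)%N ->
  objective delta r (@uvec R n m) = Aavg r m - delta / m%:R.
Proof.
move=> m_range; rewrite /objective linf_uvec // /Aavg mulrC mulr_sumr.
rewrite [in RHS]big_mkcond /=; congr (_ - _); apply: eq_bigr => i _.
by rewrite /uvec; case: ifP; rewrite ?mul0r // mulrC.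
Qed.

Lemma prefix_sum_subr_le (delta : R) (r : 'I_n -> R) (V : R) (k : nat) :
  (1 <= k <= n)%N -> Aavg r k - delta / k%:R <= V ->
  \sum_(i < n | (i < k)%N) (r i - V) <= delta.
Proof.
move=> /andP[k_gt0 le_k_n]; have k_pos : 0 < k%:R :> R by rewrite ltr0n.
rewrite /Aavg mulrC -mulrBl ler_pdivrMr // => le_V.
rewrite sumrB -[V in \sum_(_ | _) V]mulr1 -mulr_sumr sum_prefix1 //.
by rewrite lerBlDr addrC -lerBlDr.
Qed.

Lemma objective_le (delta V : R) (r pi : 'I_n -> R) :
  0 <= delta -> (forall i j : 'I_n, (i <= j)%N -> r j <= r i) ->
  (forall k, (1 <= k <= n)%N -> \sum_(i < n | (i < k)%N) (r i - V) <= delta) ->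
  in_simplex pi -> objective delta r pi <= V.
Proof.
move=> delta_ge0 r_noninc prefix_le [pi_ge0 pi_sum1].
have pos_le : \sum_(i < n) Num.max (r i - V) 0 <= delta.
  apply: sum_prefix_max0_le => [i j le_ij|[|k] le_k_n]; first by rewrite lerD2r r_noninc.
    by rewrite big_pred0.
  exact: prefix_le.
have inner_shift : \sum_(i < n) pi i * (r i - V) = \sum_(i < n) pi i * r i - V.
  by rewrite (eq_bigr _ (fun i _ => mulrBr _ _ _)) sumrB -mulr_suml pi_sum1 mul1r.
rewrite /objective lerBlDr addrC -lerBlDr -inner_shift mulrC.
apply: le_trans (sum_mul_le_max0 _ _ _ pi_ge0 (le_linf pi)) _.
by rewrite ler_wpM2l // bigmax_ge_id.
Qed.

End Objective.

Theorem mainTheorem11 (R : realFieldType) (n : nat) (delta : R) (r : 'I_n -> R) :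
  (0 < n)%N -> 0 <= delta ->
  (forall i j : 'I_n, (i <= j)%N -> r j <= r i) ->
  exists m : nat,
    [/\ (1 <= m <= n)%N,
        (forall k : nat, (1 <= k <= n)%N ->
           Aavg r k - delta / k%:R <= Aavg r m - delta / m%:R),
        in_simplex (@uvec R n m) &
        (forall pi : 'I_n -> R, in_simplex pi ->
           objective delta r pi <= objective delta r (@uvec R n m))].
Proof.
move=> n_gt0 delta_ge0 r_noninc.
have [m m_range m_max] := exists_argmax_nat (fun k => Aavg r k - delta / k%:R) n_gt0.
exists m; split=> //; first exact: uvec_simplex.
move=> pi pi_simplex; rewrite objective_uvec //.
apply: objective_le => // k k_range.
exact/prefix_sum_subr_le/m_max.
Qed.
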